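(* Let $A\ge 1$ and $0<\sigma<1$. Let $W(\sigma,A)$ be as in the context, let ${}_2F_1(1,2A+2,2A+3,\sigma)=(2A+2)\sum_{n\ge0}\frac{\sigma^n}{n+2A+2}$, and let $Q(\sigma,A)=\sum_{i=0}^{11}q_i(\sigma)A^{11-i}(1-\sigma)^{11-i}$ with $q_0=64$, $q_1=32(4+7\sigma)$, $q_2=80(-3+13\sigma)$, $q_3=48(-12+3\sigma+39\sigma^2-17\sigma^3)$, $q_4=12(17-278\sigma+400\sigma^2-90\sigma^3-65\sigma^4)$, $q_5=6(980+1365\sigma+424\sigma^2+1374\sigma^3-876\sigma^4+109\sigma^5)$, $q_6=35363+88857\sigma+75432\sigma^2+45698\sigma^3-1965\sigma^4-2715\sigma^5+1250\sigma^6$, $q_7=100336+279172\sigma+377163\sigma^2+267688\sigma^3+118786\sigma^4-12360\sigma^5+2611\sigma^6+244\sigma^7$, $q_8=2(74901+220667\sigma+395067\sigma^2+388137\sigma^3+222947\sigma^4+77061\sigma^5-2895\sigma^6+1355\sigma^7-240\sigma^8)$, $q_9=3(40659+122280\sigma+287397\sigma^2+350940\sigma^3+284873\sigma^4+126322\sigma^5+37701\sigma^6+724\sigma^7+206\sigma^8-102\sigma^9)$, $q_{10}=9(5673+16595\sigma+51926\sigma^2+83180\sigma^3+83930\sigma^4+50678\sigma^5+17870\sigma^6+4994\sigma^7+155\sigma^8+5\sigma^9-6\sigma^{10})$, $q_{11}=27(315+840\sigma+3465\sigma^2+9576\sigma^3+6510\sigma^4+9864\sigma^5+3150\sigma^6+1000\sigma^7+279\sigma^8+\sigma^{10})$.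 Define $$\widetilde H(\sigma,A)=\frac{12}{35}\sigma^2\left\{\frac{Q(\sigma,A)}{(1-\sigma)^3W(\sigma,A)^3}-A(A-1)(A^2-1)(4A^2-1)(4A^2-9)\frac{(1-\sigma)^6}{W(\sigma,A)^2}\,{}_2F_1(1,2A+2,2A+3,\sigma)\right\}.$$ Then for every $a>0$, $\lambda\ge0$ with $A=\sqrt{1+3\lambda/a^2}$, the function $H(S)=a^3\widetilde H(e^{-aS},A)$ is the unique solution on $(0,\infty)$ of $$4Y(S,a,\lambda)H(S)+\Bigl(\tfrac{d}{dS}Y(S,a,\lambda)\Bigr)^2+6H'(S)=0$$ satisfying $H(S)\to0$ as $S\to\infty$, where $Y$ is as in the context. Moreover $\widetilde H(\sigma,A)=\frac{108\,\sigma^2}{(A+1)(2A+1)^2}+O(\sigma^3)$ as $\sigma\to0$.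
   Context: $W(\sigma,A)=4A^3(1-\sigma)^3+12A^2(1-\sigma)^2(1+\sigma)+A(1-\sigma)(11+38\sigma+11\sigma^2)+3(1+\sigma)(1+8\sigma+\sigma^2)$, $U(\sigma,A)=2A^2(1-\sigma)^2+5A(1-\sigma)(1+\sigma)+3(1+3\sigma+\sigma^2)$, and with $\sigma=e^{-aS}$, $Y(S,a,\lambda)=a\bigl(-3A-36\,\sigma U(\sigma,A)/((1-\sigma)W(\sigma,A))\bigr)$. *)

From Stdlib Require Import Reals Lra ClassicalEpsilon.
Open Scope R_scope.

Definition W (s A : R) : R :=
  4 * A^3 * (1 - s)^3 + 12 * A^2 * (1 - s)^2 * (1 + s)
  + A * (1 - s) * (11 + 38 * s + 11 * s^2) + 3 * (1 + s) * (1 + 8 * s + s^2).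

Definition U (s A : R) : R :=
  2 * A^2 * (1 - s)^2 + 5 * A * (1 - s) * (1 + s) + 3 * (1 + 3 * s + s^2).

Definition Apar (a lam : R) : R := sqrt (1 + 3 * lam / a^2).

Definition Y (S a lam : R) : R :=
  let A := Apar a lam in
  let s := exp (- (a * S)) in
  a * (- 3 * A - 36 * s * U s A / ((1 - s) * W s A)).

(* The value of the series sum_{n>=0} s^n/(n+2A+2) (chosen by classical
   choice; it is the actual sum whenever the series converges, e.g. 0<s<1). *)
Definition ser21 (s A : R) : R :=
  epsilon (inhabits 0)
    (fun l => infinite_sum (fun n => s ^ n / (INR n + 2 * A + 2)) l).

Definition F21 (s A : R) : R := (2 * A + 2) * ser21 s A.

Definition q (i : nat) (s : R) : R :=
  match i with
  | 0%nat => 64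
  | 1%nat => 32 * (4 + 7 * s)
  | 2%nat => 80 * (-3 + 13 * s)
  | 3%nat => 48 * (-12 + 3 * s + 39 * s^2 - 17 * s^3)
  | 4%nat => 12 * (17 - 278 * s + 400 * s^2 - 90 * s^3 - 65 * s^4)
  | 5%nat => 6 * (980 + 1365 * s + 424 * s^2 + 1374 * s^3 - 876 * s^4 + 109 * s^5)
  | 6%nat => 35363 + 88857 * s + 75432 * s^2 + 45698 * s^3 - 1965 * s^4
             - 2715 * s^5 + 1250 * s^6
  | 7%nat => 100336 + 279172 * s + 377163 * s^2 + 267688 * s^3 + 118786 * s^4
             - 12360 * s^5 + 2611 * s^6 + 244 * s^7
  | 8%nat => 2 * (74901 + 220667 * s + 395067 * s^2 + 388137 * s^3
             + 222947 * s^4 + 77061 * s^5 - 2895 * s^6 + 1355 * s^7 - 240 * s^8)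
  | 9%nat => 3 * (40659 + 122280 * s + 287397 * s^2 + 350940 * s^3
             + 284873 * s^4 + 126322 * s^5 + 37701 * s^6 + 724 * s^7
             + 206 * s^8 - 102 * s^9)
  | 10%nat => 9 * (5673 + 16595 * s + 51926 * s^2 + 83180 * s^3 + 83930 * s^4
             + 50678 * s^5 + 17870 * s^6 + 4994 * s^7 + 155 * s^8 + 5 * s^9
             - 6 * s^10)
  | 11%nat => 27 * (315 + 840 * s + 3465 * s^2 + 9576 * s^3 + 6510 * s^4
             + 9864 * s^5 + 3150 * s^6 + 1000 * s^7 + 279 * s^8 + s^10)
  | _ => 0
  end.

Definition Q (s A : R) : R :=
  sum_f_R0 (fun i => q i s * A ^ (11 - i) * (1 - s) ^ (11 - i)) 11.

Definition Htilde (s A : R) : R :=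
  12 / 35 * s^2 *
  (Q s A / ((1 - s)^3 * (W s A)^3)
   - A * (A - 1) * (A^2 - 1) * (4 * A^2 - 1) * (4 * A^2 - 9)
     * (1 - s)^6 / (W s A)^2 * F21 s A).

Definition Hsol (a lam S : R) : R := a^3 * Htilde (exp (- (a * S))) (Apar a lam).

Definition solves_ode (a lam : R) (G : R -> R) : Prop :=
  forall S, 0 < S -> exists dY dG,
    derivable_pt_lim (fun t => Y t a lam) S dY /\
    derivable_pt_lim G S dG /\
    4 * Y S a lam * G S + dY^2 + 6 * dG = 0.

Definition tends_to_0_at_infty (G : R -> R) : Prop :=
  forall eps, 0 < eps -> exists M, forall S, M < S -> Rabs (G S) < eps.

(* With sigma = exp (-a S) one has Y = a * ytilde(sigma), H = a^3 * Htilde(sigma) and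
   d/dS = -a sigma d/dsigma, so the equation becomes the a-free identity
   4 ytilde Htilde + sigma^2 ytilde'^2 = 6 sigma Htilde'.  This is a rational identity
   in sigma, A and F = 2F1(1, 2A+2; 2A+3; sigma) once F' is eliminated through the
   hypergeometric equation sigma F' + (2A+2) F = (2A+2)/(1 - sigma).
   Since Htilde = (12/35) sigma^2 times a function differentiable at 0, Htilde has the
   stated expansion and H tends to 0 at infinity.  Finally the difference D of two
   solutions satisfies 6 D' = -4 Y D with Y < 0, so D^2 is nondecreasing; as D tends to
   0 at infinity it vanishes. *)

From Stdlib Require Import Reals Lra ClassicalEpsilon.
From Coquelicot Require Import Coquelicot.
Open Scope R_scope.

Definition ser21_coef (A : R) (n : nat) : R := / (INR n + 2 * A + 2).

Section Hypergeometric.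

Variable A : R.
Hypothesis A_gt_m1 : -1 < A.

Lemma ser21_denom_pos n : 0 < INR n + 2 * A + 2.
Proof. pose proof (pos_INR n); lra. Qed.

Lemma CV_radius_ser21_coef : Rbar_le 1 (CV_radius (ser21_coef A)).
Proof.
  apply (proj1 (CV_radius_bounded _)). exists (/ (2 * A + 2)). intros n.
  pose proof (ser21_denom_pos n) as Hn.
  rewrite pow1, Rmult_1_r. unfold ser21_coef.
  rewrite Rabs_inv, Rabs_pos_eq by lra.
  apply Rinv_le_contravar; [lra | pose proof (pos_INR n); lra].
Qed.

Lemma CV_radius_ser21_coef_gt s :
  Rabs s < 1 -> Rbar_lt (Rabs s) (CV_radius (ser21_coef A)).
Proof. intros Hs. apply (Rbar_lt_le_trans _ 1); [exact Hs | apply CV_radius_ser21_coef]. Qed.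

Lemma ser21_PSeries s : Rabs s < 1 -> ser21 s A = PSeries (ser21_coef A) s.
Proof.
  intros Hs.
  assert (Hsum : infinite_sum (fun n => s ^ n / (INR n + 2 * A + 2))
                   (PSeries (ser21_coef A) s)).
  { apply is_series_Reals.
    eapply is_series_ext;
      [| exact (PSeries_correct _ _ (CV_radius_inside _ _ (CV_radius_ser21_coef_gt s Hs)))].
    intros n. simpl. rewrite pow_n_pow. unfold scal, ser21_coef, Rdiv. simpl.
    unfold mult. simpl. ring. }
  apply (uniqueness_sum (fun n => s ^ n / (INR n + 2 * A + 2))); [| exact Hsum].
  unfold ser21. apply epsilon_spec. eauto.
Qed.

(* Coefficientwise [(n + 2A + 2) c_n = 1], so the left-hand side is the geometric series. *)
Lemma PSeries_ser21_coef_ode s : Rabs s < 1 ->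
  s * PSeries (PS_derive (ser21_coef A)) s + (2 * A + 2) * PSeries (ser21_coef A) s
  = / (1 - s).
Proof.
  intros Hs.
  pose proof (CV_radius_ser21_coef_gt s Hs) as Hr.
  pose proof (is_pseries_incr_1 _ _ _
                (PSeries_correct _ _ (ex_pseries_derive _ _ Hr))) as HD.
  pose proof (PSeries_correct _ _ (CV_radius_inside _ _ Hr)) as HP.
  apply (is_pseries_scal (2 * A + 2)) in HP; [| unfold mult; simpl; ring].
  assert (Hcoef : forall n, PS_plus (PS_incr_1 (PS_derive (ser21_coef A)))
                              (PS_scal (2 * A + 2) (ser21_coef A)) n = 1).
  { intros n. pose proof (ser21_denom_pos n).
    unfold PS_plus, PS_scal, PS_incr_1, PS_derive, ser21_coef, plus, scal.
    destruct n as [| n]; cbn -[INR]; unfold mult; cbn -[INR].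
    - unfold zero; simpl in *. field; lra.
    - field; lra. }
  assert (Hgeom : is_series (fun n => s ^ n)
     (plus (scal s (PSeries (PS_derive (ser21_coef A)) s))
           (scal (2 * A + 2) (PSeries (ser21_coef A) s)))).
  { eapply is_series_ext; [| exact (is_pseries_plus _ _ _ _ _ HD HP)].
    intros n. cbv beta. rewrite Hcoef, pow_n_pow.
    unfold scal; simpl; unfold mult; simpl. ring. }
  rewrite <- (is_series_unique _ _ (is_series_geom s Hs)), (is_series_unique _ _ Hgeom).
  reflexivity.
Qed.

Lemma is_derive_ser21_PSeries s : Rabs s < 1 ->
  is_derive (fun x => ser21 x A) s (PSeries (PS_derive (ser21_coef A)) s).
Proof.
  intros Hs.
  apply (is_derive_ext_loc (PSeries (ser21_coef A))).
  - assert (Hd : 0 < 1 - Rabs s) by lra.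
    exists (mkposreal _ Hd). intros y Hy.
    change (Rabs (y - s) < 1 - Rabs s) in Hy.
    symmetry. apply ser21_PSeries.
    pose proof (Rabs_triang_inv y s). lra.
  - apply is_derive_PSeries, CV_radius_ser21_coef_gt, Hs.
Qed.

Lemma is_derive_ser21 s : Rabs s < 1 -> s <> 0 ->
  is_derive (fun x => ser21 x A) s ((/ (1 - s) - (2 * A + 2) * ser21 s A) / s).
Proof.
  intros Hs Hs0.
  replace ((/ (1 - s) - (2 * A + 2) * ser21 s A) / s)
    with (PSeries (PS_derive (ser21_coef A)) s).
  - apply is_derive_ser21_PSeries, Hs.
  - rewrite <- PSeries_ser21_coef_ode, ser21_PSeries by exact Hs. field. exact Hs0.
Qed.

End Hypergeometric.

Lemma W_pos s A : 0 <= A -> 0 <= s < 1 -> 0 < W s A.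
Proof.
  intros HA Hs. unfold W.
  assert (0 <= A * (1 - s)) by nra.
  assert (0 <= (A * (1 - s)) ^ 2 * (1 + s)) by (apply Rmult_le_pos; [apply pow2_ge_0 | lra]).
  assert (0 <= (A * (1 - s)) ^ 3) by (apply pow_le; lra).
  assert (0 <= A * (1 - s) * (11 + 38 * s + 11 * s ^ 2)) by (apply Rmult_le_pos; nra).
  assert (0 < (1 + s) * (1 + 8 * s + s ^ 2)) by (apply Rmult_lt_0_compat; nra).
  rewrite Rpow_mult_distr in *. nra.
Qed.

Lemma U_pos s A : 0 <= A -> 0 <= s < 1 -> 0 < U s A.
Proof.
  intros HA Hs. unfold U.
  assert (0 <= A * (1 - s)) by nra.
  assert (0 <= A * (1 - s) * (1 + s)) by (apply Rmult_le_pos; lra).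
  assert (0 <= (A * (1 - s)) ^ 2) by apply pow2_ge_0.
  rewrite Rpow_mult_distr in *. nra.
Qed.

Definition ytilde (A s : R) : R := - 3 * A - 36 * s * U s A / ((1 - s) * W s A).

Lemma ytilde_neg A s : 0 <= A -> 0 < s < 1 -> ytilde A s < 0.
Proof.
  intros HA Hs. unfold ytilde.
  pose proof (W_pos s A HA (conj (Rlt_le _ _ (proj1 Hs)) (proj2 Hs))).
  pose proof (U_pos s A HA (conj (Rlt_le _ _ (proj1 Hs)) (proj2 Hs))).
  assert (0 < 36 * s * U s A / ((1 - s) * W s A)).
  { apply Rdiv_lt_0_compat; apply Rmult_lt_0_compat; lra. }
  lra.
Qed.

(* Side conditions of [auto_derive] and [field] below: nonvanishing of [s], [1 - s] and
   of [W s A] written out, and differentiability of [ser21], available as a hypothesis. *)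
Ltac solve_nonzero_W s A :=
  repeat split; repeat apply Rmult_integral_contrapositive_currified; try lra;
  try (eexists; eassumption);
  match goal with |- ?X <> 0 =>
    replace X with (W s A) by (unfold W; ring); lra end.

Lemma Htilde_ode_sigma A s : 0 <= A -> 0 < s < 1 ->
  exists dy dh, is_derive (ytilde A) s dy /\ is_derive (fun x => Htilde x A) s dh /\
    4 * ytilde A s * Htilde s A + s ^ 2 * dy ^ 2 - 6 * s * dh = 0.
Proof.
  intros HA Hs.
  pose proof (W_pos s A HA (conj (Rlt_le _ _ (proj1 Hs)) (proj2 Hs))) as HW.
  assert (Hs1 : Rabs s < 1) by (rewrite Rabs_pos_eq; lra).
  pose proof (is_derive_ser21 A ltac:(lra) s Hs1 ltac:(lra)) as Hd.
  eexists; eexists; split; [| split].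
  - unfold ytilde, U, W. auto_derive; [solve_nonzero_W s A | reflexivity].
  - unfold Htilde, Q, F21, W. cbn [sum_f_R0 q Nat.sub].
    auto_derive; [solve_nonzero_W s A | reflexivity].
  - match goal with |- context [Derive ?g s] =>
      rewrite (is_derive_unique g s _ Hd) end.
    unfold ytilde, Htilde, Q, F21, U, W in *. cbn [sum_f_R0 q Nat.sub].
    field. solve_nonzero_W s A.
Qed.

Lemma exp_neg_mul_in_01 a t : 0 < a -> 0 < t -> 0 < exp (- (a * t)) < 1.
Proof.
  intros Ha Ht. split; [apply exp_pos |].
  rewrite <- exp_0. apply exp_increasing. nra.
Qed.

Lemma is_derive_comp_exp_neg_mul (f : R -> R) a t df :
  is_derive f (exp (- (a * t))) df ->
  is_derive (fun x => f (exp (- (a * x)))) t (- a * exp (- (a * t)) * df).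
Proof.
  intros Hf. apply (is_derive_comp f (fun x => exp (- (a * x)))); [exact Hf |].
  auto_derive; [exact I | ring].
Qed.

Lemma Hsol_solves_ode a lam : 0 < a -> 0 <= lam -> solves_ode a lam (Hsol a lam).
Proof.
  intros Ha Hlam S HS.
  set (A := Apar a lam). set (s := exp (- (a * S))).
  destruct (Htilde_ode_sigma A s (sqrt_pos _) (exp_neg_mul_in_01 a S Ha HS))
    as [dy [dh [Hy [Hh Hode]]]].
  exists (a * (- a * s * dy)), (a ^ 3 * (- a * s * dh)). split; [| split].
  - apply is_derive_Reals, (is_derive_scal (fun x => ytilde A (exp (- (a * x))))).
    exact (is_derive_comp_exp_neg_mul _ a S dy Hy).
  - apply is_derive_Reals, (is_derive_scal (fun x => Htilde (exp (- (a * x))) A)).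
    exact (is_derive_comp_exp_neg_mul (fun x => Htilde x A) a S dh Hh).
  - change (4 * (a * ytilde A s) * (a ^ 3 * Htilde s A) + (a * (- a * s * dy)) ^ 2
            + 6 * (a ^ 3 * (- a * s * dh)) = 0).
    replace (4 * (a * ytilde A s) * (a ^ 3 * Htilde s A) + (a * (- a * s * dy)) ^ 2
            + 6 * (a ^ 3 * (- a * s * dh)))
      with (a ^ 4 * (4 * ytilde A s * Htilde s A + s ^ 2 * dy ^ 2 - 6 * s * dh)) by ring.
    rewrite Hode. ring.
Qed.

Lemma derivable_pt_lim_lipschitz_near (f : R -> R) x0 d :
  derivable_pt_lim f x0 d ->
  exists C delta, 0 < delta /\
    forall x, Rabs (x - x0) < delta -> Rabs (f x - f x0) <= C * Rabs (x - x0).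
Proof.
  intros Hf. destruct (Hf 1 Rlt_0_1) as [delta Hdelta].
  exists (Rabs d + 1), delta. split; [apply cond_pos |]. intros x Hx.
  destruct (Req_dec x x0) as [-> | Hne].
  { rewrite !Rminus_diag, Rabs_R0. lra. }
  assert (Hh : x - x0 <> 0) by lra.
  specialize (Hdelta (x - x0) Hh Hx). replace (x0 + (x - x0)) with x in Hdelta by ring.
  replace (f x - f x0) with ((x - x0) * ((f x - f x0) / (x - x0) - d) + (x - x0) * d)
    by (field; exact Hh).
  eapply Rle_trans; [apply Rabs_triang |]. rewrite !Rabs_mult.
  pose proof (Rabs_pos (x - x0)). nra.
Qed.

Definition Hbracket (A s : R) : R :=
  Q s A / ((1 - s)^3 * (W s A)^3)
  - A * (A - 1) * (A^2 - 1) * (4 * A^2 - 1) * (4 * A^2 - 9)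
    * (1 - s)^6 / (W s A)^2 * F21 s A.

Section Asymptotics.

Variable A : R.
Hypothesis A_ge0 : 0 <= A.

Lemma ex_derive_Hbracket_0 : ex_derive (Hbracket A) 0.
Proof.
  pose proof (W_pos 0 A A_ge0 ltac:(lra)) as HW.
  assert (H0 : Rabs 0 < 1) by (rewrite Rabs_R0; lra).
  pose proof (is_derive_ser21_PSeries A ltac:(lra) 0 H0) as Hd.
  unfold Hbracket, Q, F21, W. cbn [sum_f_R0 q Nat.sub].
  auto_derive. solve_nonzero_W 0 A.
Qed.

Lemma Hbracket_0 : 12 / 35 * Hbracket A 0 = 108 / ((A + 1) * (2 * A + 1)^2).
Proof.
  assert (H0 : Rabs 0 < 1) by (rewrite Rabs_R0; lra).
  unfold Hbracket, F21. rewrite (ser21_PSeries A ltac:(lra) 0 H0), PSeries_0.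
  replace (W 0 A) with ((A + 1) * (2 * A + 1) * (2 * A + 3)) by (unfold W; ring).
  unfold Q, ser21_coef. cbn [sum_f_R0 q Nat.sub INR].
  field. repeat split; lra.
Qed.

Lemma Htilde_asymptotic : exists C delta, 0 < delta /\
  forall s, 0 < s < delta ->
    Rabs (Htilde s A - 108 * s^2 / ((A + 1) * (2 * A + 1)^2)) <= C * s^3.
Proof.
  destruct ex_derive_Hbracket_0 as [d Hd].
  destruct (derivable_pt_lim_lipschitz_near (Hbracket A) 0 d (proj1 (is_derive_Reals _ _ _) Hd))
    as [C [delta [Hdelta HC]]].
  exists (12 / 35 * C), delta. split; [exact Hdelta |]. intros s Hs.
  assert (Habs : Rabs (s - 0) = s) by (rewrite Rminus_0_r; apply Rabs_pos_eq; lra).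
  specialize (HC s ltac:(lra)). rewrite Habs in HC.
  replace (108 * s^2 / ((A + 1) * (2 * A + 1)^2)) with (s^2 * (12 / 35 * Hbracket A 0))
    by (rewrite Hbracket_0; field; split; nra).
  replace (Htilde s A - s^2 * (12 / 35 * Hbracket A 0))
    with (12 / 35 * s^2 * (Hbracket A s - Hbracket A 0)) by (unfold Htilde, Hbracket; ring).
  rewrite Rabs_mult, (Rabs_pos_eq (12 / 35 * s^2)) by nra.
  replace (12 / 35 * C * s^3) with (12 / 35 * s^2 * (C * s)) by ring.
  apply Rmult_le_compat_l; [nra | exact HC].
Qed.

Lemma continuity_pt_Htilde_0 : continuity_pt (fun s => Htilde s A) 0.
Proof.
  apply continuity_pt_filterlim.
  refine (ex_derive_continuous (fun s => Htilde s A) 0 _).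
  apply (ex_derive_ext (fun s => 12 / 35 * s^2 * Hbracket A s)); [reflexivity |].
  apply ex_derive_mult; [auto_derive; exact I | exact ex_derive_Hbracket_0].
Qed.

End Asymptotics.

Lemma tends_to_0_at_infty_comp_exp (g : R -> R) a : 0 < a ->
  continuity_pt g 0 -> g 0 = 0 -> tends_to_0_at_infty (fun t => g (exp (- (a * t)))).
Proof.
  intros Ha Hg Hg0 eps Heps.
  destruct (Hg eps Heps) as [alpha [Halpha Hclose]].
  exists (- ln alpha / a). intros t Ht.
  assert (Hsmall : exp (- (a * t)) < alpha).
  { rewrite <- (exp_ln alpha Halpha). apply exp_increasing.
    apply (Rmult_lt_compat_l a) in Ht; [| exact Ha]. field_simplify in Ht; lra. }
  pose proof (exp_pos (- (a * t))) as Hpos.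
  specialize (Hclose (exp (- (a * t)))). simpl in Hclose. unfold R_dist in Hclose.
  rewrite Hg0, !Rminus_0_r, (Rabs_pos_eq (exp _)) in Hclose by lra.
  apply Hclose. split; [split; [exact I | lra] | exact Hsmall].
Qed.

Lemma Hsol_tends_to_0 a lam : 0 < a -> 0 <= lam -> tends_to_0_at_infty (Hsol a lam).
Proof.
  intros Ha Hlam.
  apply (tends_to_0_at_infty_comp_exp (fun s => a^3 * Htilde s (Apar a lam))); [exact Ha | |].
  - apply continuity_pt_scal, continuity_pt_Htilde_0, sqrt_pos.
  - unfold Htilde. ring.
Qed.

Lemma nondecreasing_of_derive_nonneg (f df : R -> R) x0 :
  (forall x, x0 < x -> is_derive f x (df x)) -> (forall x, x0 < x -> 0 <= df x) ->
  forall x y, x0 < x -> x <= y -> f x <= f y.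
Proof.
  intros Hf Hdf x y Hx Hxy.
  destruct (Req_dec x y) as [-> | Hne]; [lra |].
  destruct (MVT_gen f x y df) as [c [Hc Hmvt]];
    rewrite Rmin_left, Rmax_right in * by lra.
  - intros z Hz. apply Hf. lra.
  - intros z Hz. apply continuity_pt_filterlim, (ex_derive_continuous f z).
    exists (df z). apply Hf. lra.
  - pose proof (Hdf c ltac:(lra)). nra.
Qed.

Lemma tends_to_0_at_infty_minus (G H : R -> R) :
  tends_to_0_at_infty G -> tends_to_0_at_infty H ->
  tends_to_0_at_infty (fun x => G x - H x).
Proof.
  intros HG HH eps Heps.
  destruct (HG (eps / 2) ltac:(lra)) as [MG HMG].
  destruct (HH (eps / 2) ltac:(lra)) as [MH HMH].
  exists (Rmax MG MH). intros x Hx.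
  specialize (HMG x (Rle_lt_trans _ _ _ (Rmax_l MG MH) Hx)).
  specialize (HMH x (Rle_lt_trans _ _ _ (Rmax_r MG MH) Hx)).
  unfold Rminus. eapply Rle_lt_trans; [apply Rabs_triang |]. rewrite Rabs_Ropp. lra.
Qed.

Lemma eq_0_of_abs_nondecreasing (D : R -> R) x0 :
  (forall t, x0 < t -> Rabs (D x0) <= Rabs (D t)) -> tends_to_0_at_infty D -> D x0 = 0.
Proof.
  intros Hmono HD.
  destruct (Req_dec (D x0) 0) as [| Hne]; [assumption | exfalso].
  destruct (HD (Rabs (D x0)) (Rabs_pos_lt _ Hne)) as [M HM].
  set (t := Rmax x0 M + 1).
  specialize (Hmono t ltac:(unfold t; pose proof (Rmax_l x0 M); lra)).
  specialize (HM t ltac:(unfold t; pose proof (Rmax_r x0 M); lra)).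
  lra.
Qed.

Lemma Y_neg a lam t : 0 < a -> 0 <= lam -> 0 < t -> Y t a lam < 0.
Proof.
  intros Ha Hlam Ht.
  change (a * ytilde (Apar a lam) (exp (- (a * t))) < 0).
  pose proof (ytilde_neg (Apar a lam) _ (sqrt_pos _) (exp_neg_mul_in_01 a t Ha Ht)).
  nra.
Qed.

Lemma solves_ode_unique a lam (G H : R -> R) : 0 < a -> 0 <= lam ->
  solves_ode a lam G -> tends_to_0_at_infty G ->
  solves_ode a lam H -> tends_to_0_at_infty H ->
  forall S, 0 < S -> G S = H S.
Proof.
  intros Ha Hlam HG HG_decay HH HH_decay S HS.
  set (D := fun x => G x - H x).
  assert (Hderiv : forall x, 0 < x ->
            is_derive (fun x => D x ^ 2) x (- (4 / 3) * Y x a lam * D x ^ 2)).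
  { intros x Hx.
    destruct (HG x Hx) as [dY [dG [HYG [HdG EG]]]].
    destruct (HH x Hx) as [dY' [dH [HYH [HdH EH]]]].
    rewrite (uniqueness_limite _ _ _ _ HYH HYG) in EH.
    apply is_derive_Reals in HdG, HdH.
    replace (- (4 / 3) * Y x a lam * D x ^ 2) with (INR 2 * (dG - dH) * D x ^ 1)
      by (unfold D; simpl; nra).
    apply (is_derive_pow (fun x => G x - H x) 2 x (dG - dH)).
    apply (is_derive_minus G H x dG dH HdG HdH). }
  assert (Hmono : forall t, S < t -> Rabs (D S) <= Rabs (D t)).
  { intros t Ht. apply Rsqr_le_abs_0. rewrite !Rsqr_pow2.
    refine (nondecreasing_of_derive_nonneg (fun x => D x ^ 2) _ 0 Hderiv _ S t HS _); [| lra].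
    intros x Hx. pose proof (Y_neg a lam x Ha Hlam Hx). pose proof (pow2_ge_0 (D x)). nra. }
  apply Rminus_diag_uniq.
  exact (eq_0_of_abs_nondecreasing D S Hmono (tends_to_0_at_infty_minus G H HG_decay HH_decay)).
Qed.

Theorem mainTheorem3 :
  (forall a lam, 0 < a -> 0 <= lam ->
     solves_ode a lam (Hsol a lam) /\
     tends_to_0_at_infty (Hsol a lam) /\
     (forall G : R -> R, solves_ode a lam G -> tends_to_0_at_infty G ->
        forall S, 0 < S -> G S = Hsol a lam S)) /\
  (forall A, 1 <= A ->
     exists C delta, 0 < delta /\
       forall s, 0 < s < delta ->
         Rabs (Htilde s A - 108 * s^2 / ((A + 1) * (2 * A + 1)^2)) <= C * s^3).
Proof.
  split.
  - intros a lam Ha Hlam.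
    pose proof (Hsol_solves_ode a lam Ha Hlam) as Hsol_ode.
    pose proof (Hsol_tends_to_0 a lam Ha Hlam) as Hsol_decay.
    split; [exact Hsol_ode | split; [exact Hsol_decay |]].
    intros G HG HG_decay.
    exact (solves_ode_unique a lam G (Hsol a lam) Ha Hlam HG HG_decay Hsol_ode Hsol_decay).
  - intros A HA. apply Htilde_asymptotic. lra.
Qed.
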